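(* Let $b\in C^1([0,\infty))$ satisfy $b(t)>0$ for all $t\ge0$ and $\limsup_{t\to\infty}\frac{|b'(t)|}{b(t)^2}<1$. Then $$B_0:=\int_0^\infty\exp\Big(-\int_0^sb(\sigma)\,d\sigma\Big)\,ds<\infty\quad\text{and}\quad \lim_{t\to\infty}\frac{1}{b(t)}\exp\Big(-\int_0^tb(\sigma)\,d\sigma\Big)=0.$$ Assume further that $1/b\notin L^1(0,\infty)$ and that there exist $\gamma>0$ and $C>0$ with $\frac{|b'(t)|}{b(t)^2}\le C(t+1)^{-\gamma}$ for $t>0$. Then $$\lim_{t\to\infty}\frac{1}{b(t)^2(B(t)+1)}=0,\qquad\text{where } B(t)=\int_0^t\frac{d\sigma}{b(\sigma)}.$$ *)

From Stdlib Require Import Reals.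
From Coquelicot Require Import Coquelicot.
Open Scope R_scope.

(* b is C^1 on [0, +oo) with derivative b':
   b' is the derivative of b at every t > 0, the right derivative at 0,
   and b, b' are continuous on [0, +oo) (relative topology). *)
Definition C1_nonneg (b b' : R -> R) : Prop :=
  (forall t, 0 < t -> is_derive b t (b' t)) /\
  filterlim (fun h => (b h - b 0) / h) (at_right 0) (locally (b' 0)) /\
  (forall t, 0 <= t ->
     filterlim b (within (fun x => 0 <= x) (locally t)) (locally (b t))) /\
  (forall t, 0 <= t ->
     filterlim b' (within (fun x => 0 <= x) (locally t)) (locally (b' t))).

(* limsup_{t -> +oo} f t < c, unfolded:
   inf_T sup_{t >= T} f t < c  iff  some tail of f is bounded by some q < c. *)
Definition limsup_pinfty_lt (f : R -> R) (c : R) : Prop :=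
  exists T q, q < c /\ forall t, T <= t -> f t <= q.

From Stdlib Require Import Reals Lra.
From Coquelicot Require Import Coquelicot.
Open Scope R_scope.

(* Let e(t) = exp (- \int_0^t b) and let q < 1 bound |b'| / b^2 eventually.  Since
   (e / b)' = - e (1 + b' / b^2) <= - (1 - q) e, the function e / b + (1 - q) \int_0^t e is
   eventually nonincreasing, so e is integrable.  Being nonincreasing and integrable, e satisfies
   t e(t) -> 0, while 1 / b grows at most linearly because (1 / b)' = - b' / b^2 is bounded;
   hence e / b -> 0.  Under the decay hypothesis, u = 1 / b satisfies |u'| <= K with
   K(s) = C (s + 1)^(-gamma) -> 0, so u(t) / t -> 0, and u stays above u(t) / 2 on an interval
   ending at t long enough to give u(t)^2 <= (4 K(t/2) + 4 u(t) / t) \int_0^t u. *)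

Lemma is_derive_increment_le (f df : R -> R) (a c K : R) : a <= c ->
  (forall x, a <= x <= c -> is_derive f x (df x)) ->
  (forall x, a <= x <= c -> df x <= K) -> f c - f a <= K * (c - a).
Proof.
  intros Hac Hd HK.
  destruct (MVT_gen f a c df) as [x [Hx ->]]; rewrite ?Rmin_left, ?Rmax_right in * by lra.
  - intros x Hx; apply Hd; lra.
  - intros x Hx; apply continuity_pt_filterlim, (ex_derive_continuous f x).
    exists (df x); apply Hd; lra.
  - apply Rmult_le_compat_r; [lra | apply HK; lra].
Qed.

Lemma is_derive_increment_ge (f df : R -> R) (a c K : R) : a <= c ->
  (forall x, a <= x <= c -> is_derive f x (df x)) ->
  (forall x, a <= x <= c -> K <= df x) -> K * (c - a) <= f c - f a.
Proof.
  intros Hac Hd HK.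
  enough (- f c - - f a <= - K * (c - a)) by lra.
  apply (is_derive_increment_le (fun x => - f x) (fun x => - df x)); auto.
  - intros x Hx; exact (is_derive_opp f x (df x) (Hd x Hx)).
  - intros x Hx; specialize (HK x Hx); lra.
Qed.

Lemma is_derive_nondecreasing (f df : R -> R) :
  (forall x, is_derive f x (df x)) -> (forall x, 0 <= df x) ->
  forall x y, x <= y -> f x <= f y.
Proof.
  intros Hd Hpos x y Hxy.
  enough (0 * (y - x) <= f y - f x) by lra.
  apply (is_derive_increment_ge f df); auto.
Qed.

Lemma is_derive_RInt_continuous (f : R -> R) (a x : R) :
  (forall y, continuous f y) -> is_derive (fun t => RInt f a t) x (f x).
Proof.
  intros Hf; apply (is_derive_RInt f _ a); auto.
  apply filter_forall; intros y; apply (RInt_correct (V := R_CompleteNormedModule)).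
  apply ex_RInt_continuous; auto.
Qed.

Lemma is_lim_nondecreasing_bounded (f : R -> R) (M : R) :
  (forall x y, x <= y -> f x <= f y) -> (forall x, f x <= M) ->
  exists l : R, is_lim f p_infty l.
Proof.
  intros Hmono HM.
  destruct (completeness (fun v => exists x, v = f x)) as [l [Hub Hlub]].
  - exists M; intros v [x ->]; auto.
  - exists (f 0), 0; reflexivity.
  - exists l; apply is_lim_spec; intros eps.
    assert (Hx : exists x, l - eps < f x).
    { apply Classical_Pred_Type.not_all_not_ex; intros Hnot.
      enough (l <= l - eps) by (pose proof (cond_pos eps); lra).
      apply Hlub; intros v [x ->]; apply Rnot_lt_le, Hnot. }
    destruct Hx as [x Hx]; exists x; intros y Hy.
    assert (f x <= f y) by (apply Hmono; lra).
    assert (f y <= l) by (apply Hub; exists y; reflexivity).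
    apply Rabs_def1; lra.
Qed.

Lemma is_RInt_gen_of_is_lim_RInt (f : R -> R) (a l : R) :
  (forall x, continuous f x) -> is_lim (fun t => RInt f a t) p_infty l ->
  is_RInt_gen f (at_point a) (Rbar_locally p_infty) l.
Proof.
  intros Hf Hl.
  apply (filterlimi_lim_ext_loc (fun ab => RInt f (fst ab) (snd ab))).
  - apply filter_forall; intros [x y]; apply (RInt_correct (V := R_CompleteNormedModule)).
    apply ex_RInt_continuous; auto.
  - apply filterlim_ext_loc with (fun ab => RInt f a (snd ab)).
    + apply Filter_prod with (fun x => x = a) (fun _ => True).
      * reflexivity.
      * apply filter_true.
      * now intros x y ->.
    + apply (filterlim_comp _ _ _ snd (fun t => RInt f a t) _ (Rbar_locally p_infty)); auto.
      apply filterlim_snd.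
Qed.

Lemma is_RInt_gen_ext_gt (f g : R -> R) (a l : R) :
  (forall x, a < x -> f x = g x) ->
  is_RInt_gen f (at_point a) (Rbar_locally p_infty) l ->
  is_RInt_gen g (at_point a) (Rbar_locally p_infty) l.
Proof.
  intros Hfg; apply is_RInt_gen_ext.
  apply Filter_prod with (fun x => x = a) (fun y => a < y); try easy.
  - now exists a.
  - intros x y -> Hy z Hz; simpl in Hz.
    rewrite Rmin_left, Rmax_right in Hz by lra; apply Hfg; lra.
Qed.

Lemma is_lim_squeeze_0 (f g : R -> R) :
  Rbar_locally' p_infty (fun t => 0 <= f t <= g t) -> is_lim g p_infty 0 ->
  is_lim f p_infty 0.
Proof.
  intros Hfg; exact (is_lim_le_le_loc (fun _ => 0) g f p_infty 0 Hfg (is_lim_const 0 p_infty)).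
Qed.

Lemma is_lim_comp_half (f : R -> R) (l : Rbar) :
  is_lim f p_infty l -> is_lim (fun t => f (t / 2)) p_infty l.
Proof.
  intros Hf; apply (is_lim_ext (fun t => f (1 / 2 * t + 0))); [intros t; f_equal; field|].
  apply is_lim_comp_lin; [| lra].
  replace (Rbar_plus (Rbar_mult (1 / 2) p_infty) 0) with p_infty; [exact Hf|].
  simpl; destruct Rle_dec; [destruct Rle_lt_or_eq_dec|]; simpl; try reflexivity; lra.
Qed.

Lemma is_lim_mul_id_nonincreasing_integrable (f : R -> R) (l : R) :
  (forall x, continuous f x) -> (forall x, 0 <= f x) ->
  (forall x y, x <= y -> f y <= f x) ->
  is_lim (fun t => RInt f 0 t) p_infty l -> is_lim (fun t => t * f t) p_infty 0.
Proof.
  intros Hc Hpos Hdec Hl.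
  assert (Htail : is_lim (fun t => 2 * (RInt f 0 t - RInt f 0 (t / 2))) p_infty 0).
  { replace (Finite 0) with (Rbar_mult 2 (l - l)) by (simpl; f_equal; ring).
    apply is_lim_scal_l, (is_lim_minus _ _ _ l l); [exact Hl | | constructor].
    apply (is_lim_comp_half (fun t => RInt f 0 t)), Hl. }
  apply (is_lim_squeeze_0 _ _) with (2 := Htail).
  exists 0; intros t Ht; split; [apply Rmult_le_pos; auto; lra |].
  enough (f t * (t - t / 2) <= RInt f 0 t - RInt f 0 (t / 2)) by lra.
  apply (is_derive_increment_ge (fun s => RInt f 0 s) f); [lra | |].
  - intros x _; apply is_derive_RInt_continuous; auto.
  - intros x Hx; apply Hdec; lra.
Qed.

Lemma is_lim_div_id_of_derive_lim0 (u du : R -> R) :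
  (forall x, 0 < x -> is_derive u x (du x)) -> is_lim du p_infty 0 ->
  is_lim (fun t => u t / t) p_infty 0.
Proof.
  intros Hd Hlim; apply is_lim_spec; intros eps.
  pose proof (cond_pos eps) as Heps.
  destruct (proj2 (is_lim_spec du p_infty 0) Hlim (pos_div_2 eps)) as [T0 HT0]; simpl in HT0.
  set (T := Rmax T0 0 + 1).
  assert (HT : T0 < T /\ 0 < T)
    by (unfold T; pose proof (Rmax_l T0 0); pose proof (Rmax_r T0 0); lra).
  exists (Rmax T (2 * Rabs (u T) / eps)); intros t Ht.
  pose proof (Rmax_l T (2 * Rabs (u T) / eps)); pose proof (Rmax_r T (2 * Rabs (u T) / eps)).
  assert (Hdu : forall x, T <= x <= t -> - (eps / 2) <= du x <= eps / 2).
  { intros x Hx; specialize (HT0 x ltac:(lra)); rewrite Rminus_0_r in HT0.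
    destruct (Rabs_def2 _ _ HT0); lra. }
  assert (Hup := is_derive_increment_le u du T t (eps / 2) ltac:(lra)
                   (fun x Hx => Hd x ltac:(lra)) (fun x Hx => proj2 (Hdu x Hx))).
  assert (Hlow := is_derive_increment_ge u du T t (- (eps / 2)) ltac:(lra)
                   (fun x Hx => Hd x ltac:(lra)) (fun x Hx => proj1 (Hdu x Hx))).
  assert (HuT : 2 * Rabs (u T) < eps * t).
  { apply (Rmult_lt_reg_r (/ eps)); [apply Rinv_0_lt_compat; lra|].
    replace (eps * t * / eps) with t by (field; lra); unfold Rdiv in *; lra. }
  rewrite Rminus_0_r, Rabs_div, (Rabs_pos_eq t) by lra.
  apply Rlt_div_l; [lra|].
  pose proof (Rle_abs (u T)); pose proof (Rle_abs (- u T)); rewrite Rabs_Ropp in *.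
  apply Rabs_def1; nra.
Qed.

Lemma is_lim_Rpower_shift_neg (gamma : R) : 0 < gamma ->
  is_lim (fun t => Rpower (t + 1) (- gamma)) p_infty 0.
Proof.
  intros Hg; unfold Rpower.
  apply (is_lim_comp exp _ p_infty 0 m_infty); [apply is_lim_exp_m | |].
  - replace m_infty with (Rbar_mult (- gamma) p_infty)
      by (simpl; destruct Rle_dec; [destruct Rle_lt_or_eq_dec|]; try reflexivity; lra).
    apply is_lim_scal_l.
    apply (is_lim_ext (fun t => ln (1 * t + 1))); [intros t; now rewrite Rmult_1_l|].
    apply (is_lim_comp_lin ln 1 1 p_infty p_infty); [|lra].
    replace (Rbar_plus (Rbar_mult 1 p_infty) 1) with p_infty; [apply is_lim_ln_p|].
    simpl; destruct Rle_dec; [destruct Rle_lt_or_eq_dec|]; try reflexivity; lra.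
  - exists 0; intros; discriminate.
Qed.

Lemma Rpower_shift_neg_nonincreasing (gamma s s' : R) : 0 <= gamma -> 0 <= s <= s' ->
  Rpower (s' + 1) (- gamma) <= Rpower (s + 1) (- gamma).
Proof.
  intros Hg Hs; unfold Rpower.
  assert (ln (s + 1) <= ln (s' + 1)) by (apply ln_le; lra).
  assert (Hle : - gamma * ln (s' + 1) <= - gamma * ln (s + 1)) by nra.
  destruct (Rle_lt_or_eq_dec _ _ Hle) as [Hlt | ->]; [left; now apply exp_increasing | lra].
Qed.

Lemma continuous_comp_Rmax0 (f : R -> R) :
  (forall t, 0 <= t -> filterlim f (within (fun x => 0 <= x) (locally t)) (locally (f t))) ->
  forall x, continuous (fun y => f (Rmax 0 y)) x.
Proof.
  intros Hf x; apply (filterlim_comp _ _ _ (Rmax 0) f _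
                        (within (fun x => 0 <= x) (locally (Rmax 0 x)))).
  - intros P [eps HP]; exists eps; intros y Hy; apply HP; [| apply Rmax_l].
    change (Rabs (Rmax 0 y - Rmax 0 x) < eps); change (Rabs (y - x) < eps) in Hy.
    unfold Rmax in *; destruct (Rle_dec 0 y), (Rle_dec 0 x);
      unfold Rabs in *; repeat destruct Rcase_abs; lra.
  - apply Hf, Rmax_l.
Qed.

Lemma is_derive_comp_Rmax0 (f : R -> R) (x l : R) : 0 < x ->
  is_derive f x l -> is_derive (fun y => f (Rmax 0 y)) x l.
Proof.
  intros Hx; apply is_derive_ext_loc.
  exists (mkposreal x Hx); intros y Hy; change (Rabs (y - x) < x) in Hy.
  rewrite Rmax_right; [reflexivity|].
  destruct (Rabs_def2 _ _ Hy); lra.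
Qed.

Lemma RInt_comp_Rmax0 (f : R -> R) (t : R) : 0 <= t ->
  RInt (fun x => f (Rmax 0 x)) 0 t = RInt f 0 t.
Proof.
  intros Ht; apply RInt_ext; intros x Hx.
  rewrite Rmin_left in Hx by lra; rewrite Rmax_right by lra; reflexivity.
Qed.

Lemma C1_nonneg_comp_Rmax0 (b b' : R -> R) :
  C1_nonneg b b' -> (forall t, 0 <= t -> 0 < b t) ->
  (forall x, continuous (fun y => b (Rmax 0 y)) x) /\
  (forall x, 0 < b (Rmax 0 x)) /\
  (forall x, 0 < x -> is_derive (fun y => b (Rmax 0 y)) x (b' x)).
Proof.
  intros [Hder [_ [Hcont _]]] Hpos; split; [|split].
  - apply continuous_comp_Rmax0, Hcont.
  - intros x; apply Hpos, Rmax_l.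
  - intros x Hx; apply is_derive_comp_Rmax0, Hder; exact Hx.
Qed.

Definition exp_neg_int (b : R -> R) (t : R) : R := exp (- RInt b 0 t).

Section Integrating_factor.

Variables b b' : R -> R.
Hypothesis b_continuous : forall x, continuous b x.
Hypothesis b_pos : forall x, 0 < b x.
Hypothesis b_derive : forall x, 0 < x -> is_derive b x (b' x).

Lemma exp_neg_int_pos x : 0 < exp_neg_int b x.
Proof. apply exp_pos. Qed.

Lemma is_derive_exp_neg_int x : is_derive (exp_neg_int b) x (- b x * exp_neg_int b x).
Proof.
  apply (is_derive_comp exp (fun t => - RInt b 0 t)).
  - apply is_derive_exp.
  - apply (is_derive_opp (fun t => RInt b 0 t)), is_derive_RInt_continuous, b_continuous.
Qed.

Lemma continuous_exp_neg_int x : continuous (exp_neg_int b) x.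
Proof. apply (ex_derive_continuous (exp_neg_int b)); eexists; apply is_derive_exp_neg_int. Qed.

Lemma exp_neg_int_nonincreasing x y : x <= y -> exp_neg_int b y <= exp_neg_int b x.
Proof.
  intros Hxy; enough (- exp_neg_int b x <= - exp_neg_int b y) by lra.
  apply (is_derive_nondecreasing (fun t => - exp_neg_int b t) (fun t => b t * exp_neg_int b t));
    [| intros t; apply Rlt_le, Rmult_lt_0_compat, exp_neg_int_pos; apply b_pos | exact Hxy].
  intros t; replace (b t * exp_neg_int b t) with (- (- b t * exp_neg_int b t)) by ring.
  apply (is_derive_opp (exp_neg_int b)), is_derive_exp_neg_int.
Qed.

Lemma is_derive_inv_rate x : 0 < x -> is_derive (fun y => / b y) x (- b' x / b x ^ 2).
Proof. intros Hx; apply is_derive_inv; [apply b_derive, Hx | apply Rgt_not_eq, b_pos]. Qed.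

Variables T q : R.
Hypothesis T_pos : 0 < T.
Hypothesis q_lt_1 : q < 1.
Hypothesis rate_bound : forall t, T <= t -> Rabs (b' t) / b t ^ 2 <= q.

Lemma rate_between t : T <= t -> - q <= b' t / b t ^ 2 <= q.
Proof.
  intros Ht; specialize (rate_bound t Ht).
  assert (Hb2 : 0 < b t ^ 2) by apply pow_lt, b_pos.
  unfold Rdiv in *; rewrite <- (Rabs_pos_eq (/ b t ^ 2)), <- Rabs_mult in rate_bound
    by (apply Rlt_le, Rinv_0_lt_compat, Hb2).
  apply Rabs_le_between, rate_bound.
Qed.

Lemma RInt_exp_neg_int_bounded : exists M, forall t, RInt (exp_neg_int b) 0 t <= M.
Proof.
  set (E := exp_neg_int b); set (IE := fun t => RInt E 0 t).
  set (h := fun t => / b t * E t + (1 - q) * IE t).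
  assert (HIE : forall x, is_derive IE x (E x))
    by (intros x; apply is_derive_RInt_continuous, continuous_exp_neg_int).
  assert (IE_mono : forall x y, x <= y -> IE x <= IE y).
  { apply (is_derive_nondecreasing IE E HIE); intros x; apply Rlt_le, exp_neg_int_pos. }
  assert (h_nonincreasing : forall t, T <= t -> h t - h T <= 0 * (t - T)).
  { intros t Ht; apply (is_derive_increment_le h
      (fun x => - b' x / b x ^ 2 * E x + / b x * (- b x * E x) + (1 - q) * E x)); auto.
    - intros x Hx; apply (is_derive_plus (fun y => / b y * E y) (fun y => (1 - q) * IE y)).
      + apply (is_derive_mult (fun y => / b y) E); [| | apply Rmult_comm].
        * apply is_derive_inv_rate; lra.
        * apply is_derive_exp_neg_int.
      + apply is_derive_scal, HIE.
    - intros x Hx; pose proof (rate_between x (proj1 Hx)); pose proof (exp_neg_int_pos x).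
      assert (Hbx := b_pos x).
      replace (- b' x / b x ^ 2 * E x + / b x * (- b x * E x) + (1 - q) * E x)
        with (E x * - (b' x / b x ^ 2 + q)) by (field; lra).
      apply Rmult_le_0_l; [apply Rlt_le, exp_neg_int_pos | lra]. }
  assert (Hpos : forall t, 0 <= / b t * E t)
    by (intros t; apply Rlt_le, Rmult_lt_0_compat;
        [apply Rinv_0_lt_compat, b_pos | apply exp_neg_int_pos]).
  exists (h T / (1 - q)); intros t.
  apply (Rmult_le_reg_l (1 - q)); [lra|].
  replace ((1 - q) * (h T / (1 - q))) with (h T) by (field; lra).
  destruct (Rle_dec T t) as [Ht | Ht].
  - specialize (h_nonincreasing t Ht); specialize (Hpos t); unfold h in *; fold (IE t); lra.
  - specialize (IE_mono t T ltac:(lra)); specialize (Hpos T); unfold h in *; fold (IE t); nra.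
Qed.

Lemma ex_lim_RInt_exp_neg_int :
  exists l : R, is_lim (fun t => RInt (exp_neg_int b) 0 t) p_infty l.
Proof.
  destruct RInt_exp_neg_int_bounded as [M HM].
  apply (is_lim_nondecreasing_bounded _ M); auto.
  apply (is_derive_nondecreasing _ (exp_neg_int b)).
  - intros x; apply is_derive_RInt_continuous, continuous_exp_neg_int.
  - intros x; apply Rlt_le, exp_neg_int_pos.
Qed.

Lemma inv_rate_le_linear t : 1 <= t -> T <= t -> / b t <= (/ b T + q) * t.
Proof.
  intros H1 HT.
  assert (Hq : 0 <= q) by (pose proof (rate_between T (Rle_refl T)); lra).
  assert (HbT : 0 < / b T) by apply Rinv_0_lt_compat, b_pos.
  assert (/ b t - / b T <= q * (t - T)).
  { apply (is_derive_increment_le (fun y => / b y) (fun x => - b' x / b x ^ 2)); auto.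
    - intros x Hx; apply is_derive_inv_rate; lra.
    - intros x Hx; pose proof (rate_between x (proj1 Hx)); unfold Rdiv in *; lra. }
  nra.
Qed.

Lemma is_lim_inv_mul_exp_neg_int : is_lim (fun t => / b t * exp_neg_int b t) p_infty 0.
Proof.
  destruct ex_lim_RInt_exp_neg_int as [l Hl].
  assert (HtE : is_lim (fun t => (/ b T + q) * (t * exp_neg_int b t)) p_infty 0).
  { replace (Finite 0) with (Rbar_mult (/ b T + q) 0) by (simpl; f_equal; ring).
    apply is_lim_scal_l, (is_lim_mul_id_nonincreasing_integrable _ l); auto.
    - apply continuous_exp_neg_int.
    - intros x; apply Rlt_le, exp_neg_int_pos.
    - apply exp_neg_int_nonincreasing. }
  apply (is_lim_squeeze_0 _ _) with (2 := HtE).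
  exists (Rmax T 1); intros t Ht; pose proof (Rmax_l T 1); pose proof (Rmax_r T 1).
  pose proof (exp_neg_int_pos t); pose proof (Rinv_0_lt_compat _ (b_pos t)).
  pose proof (inv_rate_le_linear t ltac:(lra) ltac:(lra)).
  split; nra.
Qed.

End Integrating_factor.

Section Slowly_varying.

Variables u du K : R -> R.
Hypothesis u_continuous : forall x, continuous u x.
Hypothesis u_pos : forall x, 0 < u x.
Hypothesis u_derive : forall x, 0 < x -> is_derive u x (du x).
Hypothesis du_bound : forall x, 0 < x -> Rabs (du x) <= K x.
Hypothesis K_pos : forall x, 0 < x -> 0 < K x.
Hypothesis K_nonincreasing : forall x y, 0 < x <= y -> K y <= K x.

(* With [k = K (t / 2)], u stays above [u t / 2] on [t - d, t] for
   [d = min (t / 2) (u t / (2 k))], so [\int_0^t u >= d u(t) / 2]. *)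
Lemma sqr_le_RInt_bound t : 0 < t ->
  u t ^ 2 <= (4 * K (t / 2) + 4 * u t / t) * RInt u 0 t.
Proof.
  intros Ht; set (U := u t); set (k := K (t / 2)); set (B := fun s => RInt u 0 s).
  assert (HU : 0 < U) by apply u_pos; assert (Hk : 0 < k) by (apply K_pos; lra).
  set (d := Rmin (t / 2) (U / (2 * k))).
  assert (Hd : 0 < d <= t / 2 /\ k * d <= U / 2).
  { assert (k * (U / (2 * k)) = U / 2) by (field; lra).
    assert (0 < U / (2 * k)) by (apply Rdiv_lt_0_compat; lra).
    unfold d, Rmin; destruct Rle_dec as [Hle|Hle]; [| apply Rnot_le_lt in Hle]; repeat split; nra. }
  assert (Hlow : forall s, t - d <= s <= t -> U / 2 <= u s).
  { intros s Hs.
    assert (U - u s <= k * (t - s)).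
    { apply (is_derive_increment_le u du); [lra | intros x Hx; apply u_derive; lra |].
      intros x Hx; pose proof (du_bound x ltac:(lra)); pose proof (Rle_abs (du x)).
      pose proof (K_nonincreasing (t / 2) x ltac:(lra)) as HK; fold k in HK; lra. }
    nra. }
  assert (HB : forall x, is_derive B x (u x))
    by (intros x; apply is_derive_RInt_continuous, u_continuous).
  assert (HB_mono := is_derive_nondecreasing B u HB (fun x => Rlt_le _ _ (u_pos x))).
  assert (HB0 : B 0 = 0) by apply (RInt_point (V := R_CompleteNormedModule)).
  assert (U / 2 * (t - (t - d)) <= B t - B (t - d))
    by (apply (is_derive_increment_ge B u); [lra | intros; apply HB | exact Hlow]).
  assert (HBd : U * d / 2 <= B t) by (pose proof (HB_mono 0 (t - d) ltac:(lra)); lra).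
  assert (HUt : 0 <= 4 * U / t) by (apply Rdiv_le_0_compat; lra).
  assert (0 <= 4 * k * B t) by (apply Rmult_le_pos; nra).
  assert (0 <= 4 * U / t * B t) by (apply Rmult_le_pos; nra).
  fold (B t); rewrite Rmult_plus_distr_r.
  unfold d, Rmin in HBd; destruct Rle_dec.
  - assert (Hc : U ^ 2 = 4 * U / t * (U * (t / 2) / 2)) by (field; lra).
    assert (4 * U / t * (U * (t / 2) / 2) <= 4 * U / t * B t) by (apply Rmult_le_compat_l; lra).
    lra.
  - assert (Hc : U ^ 2 = 4 * k * (U * (U / (2 * k)) / 2)) by (field; lra).
    assert (4 * k * (U * (U / (2 * k)) / 2) <= 4 * k * B t) by (apply Rmult_le_compat_l; lra).
    lra.
Qed.

Hypothesis K_lim0 : is_lim K p_infty 0.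

Lemma is_lim_sqr_div_RInt : is_lim (fun t => u t ^ 2 / (RInt u 0 t + 1)) p_infty 0.
Proof.
  assert (Hdu : is_lim du p_infty 0).
  { apply (is_lim_le_le_loc (fun x => - K x) K _ p_infty 0); [| | exact K_lim0].
    - exists 0; intros x Hx; apply Rabs_le_between, du_bound, Hx.
    - replace (Finite 0) with (Rbar_opp 0) by (simpl; f_equal; ring).
      apply is_lim_opp, K_lim0. }
  assert (Hsum : is_lim (fun t => 4 * K (t / 2) + 4 * (u t / t)) p_infty 0).
  { replace (Finite 0) with (Rbar_plus (Rbar_mult 4 0) (Rbar_mult 4 0)) by (simpl; f_equal; ring).
    apply (is_lim_plus _ _ _ (Rbar_mult 4 0) (Rbar_mult 4 0)); [| | constructor];
      apply is_lim_scal_l.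
    - apply is_lim_comp_half, K_lim0.
    - apply (is_lim_div_id_of_derive_lim0 u du u_derive Hdu). }
  apply (is_lim_squeeze_0 _ _) with (2 := Hsum).
  exists 0; intros t Ht.
  assert (HB : 0 <= RInt u 0 t)
    by (apply RInt_ge_0; [lra | apply (ex_RInt_continuous (V := R_CompleteNormedModule)); auto
       | intros; apply Rlt_le, u_pos]).
  pose proof (sqr_le_RInt_bound t Ht); pose proof (K_pos (t / 2) ltac:(lra)).
  assert (0 <= u t / t) by (apply Rdiv_le_0_compat; [apply Rlt_le, u_pos | lra]).
  split; [apply Rdiv_le_0_compat; [apply pow2_ge_0 | lra] |].
  apply Rle_div_l; [lra |].
  replace (4 * u t / t) with (4 * (u t / t)) in * by (unfold Rdiv; ring).
  nra.
Qed.

End Slowly_varying.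

Lemma is_lim_inv_sqr_div_RInt_inv (b b' : R -> R) (gamma C : R) :
  (forall x, continuous b x) -> (forall x, 0 < b x) ->
  (forall x, 0 < x -> is_derive b x (b' x)) -> 0 < gamma -> 0 < C ->
  (forall t, 0 < t -> Rabs (b' t) / b t ^ 2 <= C * Rpower (t + 1) (- gamma)) ->
  is_lim (fun t => (/ b t) ^ 2 / (RInt (fun s => / b s) 0 t + 1)) p_infty 0.
Proof.
  intros b_continuous b_pos b_derive Hgamma HC Hbound.
  apply (is_lim_sqr_div_RInt _ (fun s => - b' s / b s ^ 2) (fun s => C * Rpower (s + 1) (- gamma))).
  - intros x; apply (continuous_comp b (fun y => / y)); [apply b_continuous|].
    apply (ex_derive_continuous (fun y => / y)); auto_derive; apply Rgt_not_eq, b_pos.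
  - intros x; apply Rinv_0_lt_compat, b_pos.
  - intros x Hx; apply is_derive_inv_rate; auto.
  - intros x Hx; unfold Rdiv; rewrite Rabs_mult, Rabs_Ropp, (Rabs_pos_eq (/ _))
      by (apply Rlt_le, Rinv_0_lt_compat, pow_lt, b_pos).
    apply Hbound, Hx.
  - intros x _; apply Rmult_lt_0_compat; [exact HC | apply exp_pos].
  - intros x y Hxy; apply Rmult_le_compat_l; [lra|].
    apply Rpower_shift_neg_nonincreasing; lra.
  - replace (Finite 0) with (Rbar_mult C 0) by (simpl; f_equal; ring).
    apply is_lim_scal_l, is_lim_Rpower_shift_neg, Hgamma.
Qed.

Theorem lemma2p1 (b b' : R -> R)
  (Hb : C1_nonneg b b')
  (Hpos : forall t, 0 <= t -> 0 < b t)
  (Hls : limsup_pinfty_lt (fun t => Rabs (b' t) / (b t) ^ 2) 1) :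
  (* B_0 = int_0^oo exp(- int_0^s b) ds < oo *)
  ex_RInt_gen (fun s => exp (- RInt b 0 s)) (at_point 0) (Rbar_locally p_infty) /\
  is_lim (fun t => / b t * exp (- RInt b 0 t)) p_infty 0 /\
  ((~ ex_RInt_gen (fun s => / b s) (at_point 0) (Rbar_locally p_infty)) ->
   (exists gamma C, 0 < gamma /\ 0 < C /\
      forall t, 0 < t -> Rabs (b' t) / (b t) ^ 2 <= C * Rpower (t + 1) (- gamma)) ->
   is_lim (fun t => / ((b t) ^ 2 * (RInt (fun s => / b s) 0 t + 1))) p_infty 0).
Proof.
  (* Extending b by [b (Rmax 0 x)] makes it continuous and positive on all of R. *)
  destruct (C1_nonneg_comp_Rmax0 b b' Hb Hpos) as [bt_continuous [bt_pos bt_derive]].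
  set (bt := fun x => b (Rmax 0 x)) in *.
  assert (bt_eq : forall x, 0 <= x -> bt x = b x)
    by (intros x Hx; unfold bt; now rewrite Rmax_right).
  assert (Hexp : forall t, 0 <= t -> exp (- RInt b 0 t) = exp_neg_int bt t)
    by (intros t Ht; unfold exp_neg_int, bt; now rewrite RInt_comp_Rmax0).
  destruct Hls as [T [q [Hq HT]]].
  assert (T1_pos : 0 < Rmax T 1) by (pose proof (Rmax_r T 1); lra).
  assert (bt_rate : forall t, Rmax T 1 <= t -> Rabs (b' t) / bt t ^ 2 <= q).
  { intros t Ht; pose proof (Rmax_l T 1); rewrite bt_eq by lra; apply HT; lra. }
  split; [|split].
  - destruct (ex_lim_RInt_exp_neg_int bt b' bt_continuous bt_pos bt_derive _ q T1_pos Hq bt_rate)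
      as [l Hl].
    exists l; apply (is_RInt_gen_ext_gt (exp_neg_int bt)).
    + intros x Hx; symmetry; apply Hexp; lra.
    + apply is_RInt_gen_of_is_lim_RInt; [apply continuous_exp_neg_int, bt_continuous | exact Hl].
  - apply (is_lim_ext_loc (fun t => / bt t * exp_neg_int bt t)).
    + exists 0; intros t Ht; rewrite Hexp, bt_eq by lra; reflexivity.
    + exact (is_lim_inv_mul_exp_neg_int bt b' bt_continuous bt_pos bt_derive _ q T1_pos Hq bt_rate).
  - intros _ [gamma [C [Hgamma [HC Hbound]]]].
    apply (is_lim_ext_loc (fun t => (/ bt t) ^ 2 / (RInt (fun s => / bt s) 0 t + 1))).
    + exists 0; intros t Ht; rewrite (RInt_comp_Rmax0 (fun s => / b s)), bt_eq by lra.
      unfold Rdiv; rewrite Rinv_mult, pow_inv; reflexivity.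
    + apply (is_lim_inv_sqr_div_RInt_inv bt b' gamma C); auto.
      intros t Ht; rewrite bt_eq by lra; apply Hbound, Ht.
Qed.
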